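(* Let $\mathcal C$ be a small strongly upper-triangular linear category. Then $\operatorname{HH}_0(\mathcal C)\cong\mathbb Z\operatorname{Ob}(\mathcal C)$, the free abelian group on $\operatorname{Ob}(\mathcal C)$, and $\operatorname{HH}_i(\mathcal C)=0$ for all $i>0$.
   Context: A small linear category $\mathcal C$ is upper-triangular if there is a partial order $\le$ on $\operatorname{Ob}(\mathcal C)$ such that $\mathcal C(x,y)\neq0$ implies $x\le y$; it is strongly upper-triangular if moreover $\mathcal C(x,x)\cong\mathbb Z$ (as rings) for every object $x$. $\operatorname{HH}_*(\mathcal C)$ denotes Hochschild–Mitchell homology: the homology of the complex $C_n=\bigoplus_{x_0,\dots,x_n}\mathcal C(x_n,x_0)\otimes\mathcal C(x_{n-1},x_n)\otimes\dots\otimes\mathcal C(x_0,x_1)$ with $d_n(f_n\otimes\dots\otimes f_0)=\sum_{i=0}^{n-1}(-1)^i f_n\otimes\dots\otimes f_{n-i}f_{n-i-1}\otimes\dots\otimes f_0+(-1)^n f_0f_n\otimes f_{n-1}\otimes\dots\otimes f_1$. *)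

From HB Require Import structures.
From Stdlib Require Import ClassicalEpsilon List.
From mathcomp Require Import all_boot all_order all_algebra.
Set Implicit Arguments. Unset Strict Implicit. Unset Printing Implicit Defensive.
Import GRing.Theory.
Local Open Scope ring_scope.

Record LinCat := {
  Ob : Type;
  Hom : Ob -> Ob -> zmodType;
  comp : forall x y z : Ob, Hom y z -> Hom x y -> Hom x z;
  idm : forall x : Ob, Hom x x;
  compA : forall w x y z (h : Hom y z) (g : Hom x y) (f : Hom w x),
      comp h (comp g f) = comp (comp h g) f;
  comp1m : forall x y (f : Hom x y), comp (idm y) f = f;
  compm1 : forall x y (f : Hom x y), comp f (idm x) = f;
  compDl : forall x y z (g g' : Hom y z) (f : Hom x y),
      comp (g + g') f = comp g f + comp g' f;
  compDr : forall x y z (g : Hom y z) (f f' : Hom x y),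
      comp g (f + f') = comp g f + comp g f'
}.
Arguments comp {_ x y z}.
Arguments idm {_}.
Arguments Hom {_}.

Definition upper_triangular (C : LinCat) : Prop :=
  exists le : Ob C -> Ob C -> Prop,
    (forall x, le x x) /\
    (forall x y, le x y -> le y x -> x = y) /\
    (forall x y z, le x y -> le y z -> le x z) /\
    (forall x y : Ob C, (exists f : Hom x y, f <> 0) -> le x y).

Definition strongly_upper_triangular (C : LinCat) : Prop :=
  upper_triangular C /\
  forall x : Ob C, exists phi : Hom x x -> int,
    bijective phi /\
    (forall f g, phi (f + g) = phi f + phi g) /\
    (forall f g, phi (comp f g) = phi f * phi g) /\
    phi (idm x) = 1.

Definition cdec (T : Type) (a b : T) : bool :=
  if excluded_middle_informative (a = b) then true else false.

Definition fsum (T : Type) := seq (int * T)%type.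

Definition coef (T : Type) (s : fsum T) (t : T) : int :=
  \sum_(p <- s) (if cdec p.2 t then p.1 else 0).

Definition fzero (T : Type) (s : fsum T) : Prop := forall t, coef s t = 0.

Definition fneg (T : Type) (s : fsum T) : fsum T := [seq (- p.1, p.2) | p <- s].

Section HM.
Variable C : LinCat.

Definition MorS := {x : Ob C & {y : Ob C & Hom x y}}.
Definition src (f : MorS) : Ob C := projT1 f.
Definition tgt (f : MorS) : Ob C := projT1 (projT2 f).
Definition mkMor (x y : Ob C) (f : Hom x y) : MorS := existT _ x (existT _ y f).

(* compS f g = f o g  (if tgt g = src f; never used otherwise) *)
Definition compS (f g : MorS) : MorS :=
  match f, g with
  | existT y (existT z f'), existT x (existT y' g') =>
    match excluded_middle_informative (y' = y) with
    | left e => mkMor (comp f' (eq_rect y' (fun w => (Hom x w : Type)) g' y e))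
    | right _ => mkMor (0 : Hom x z)
    end
  end.

(** A generator f_n (x) f_(n-1) (x) ... (x) f_0 of C_n is the list
    [:: f_n; f_(n-1); ...; f_0] with f_i : x_i -> x_(i+1), f_n : x_n -> x_0. *)
Fixpoint chainable (s : seq MorS) : Prop :=
  match s with
  | f :: ((g :: _) as t) => src f = tgt g /\ chainable t
  | _ => True
  end.
Definition cyclic (s : seq MorS) : Prop :=
  match s with f :: t => tgt f = src (last f t) | [::] => False end.
Definition wfgen (n : nat) (s : seq MorS) : Prop :=
  size s = n.+1 /\ chainable s /\ cyclic s.

(* Elements of the n-th Hochschild--Mitchell chain group: formal sums of
   generators, modulo multilinearity (see [cequiv]). *)
Definition IsChain (n : nat) (c : fsum (seq MorS)) : Prop :=
  List.Forall (fun p => wfgen n p.2) c.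

(** Multilinearity relations defining the tensor products. *)
Record MLRel := { ml_l : seq MorS; ml_r : seq MorS; ml_x : Ob C; ml_y : Ob C;
                  ml_a : Hom ml_x ml_y; ml_b : Hom ml_x ml_y }.
Definition expandR (rs : seq (int * MLRel)%type) : fsum (seq MorS) :=
  flatten [seq let: (c, r) := p in
     [:: (c, ml_l r ++ mkMor (ml_a r + ml_b r) :: ml_r r);
         (- c, ml_l r ++ mkMor (ml_a r) :: ml_r r);
         (- c, ml_l r ++ mkMor (ml_b r) :: ml_r r)] | p <- rs].
Definition inR (s : fsum (seq MorS)) : Prop :=
  exists rs : seq (int * MLRel)%type, forall g, coef s g = coef (expandR rs) g.
Definition cequiv (s t : fsum (seq MorS)) : Prop := inR (s ++ fneg t).

Fixpoint face (i : nat) (s : seq MorS) : seq MorS :=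
  match i, s with
  | 0, f :: g :: t => compS f g :: t
  | i'.+1, f :: t => f :: face i' t
  | _, _ => s
  end.
(* [:: f_n; ...; f_0] |-> [:: f_0 f_n; f_(n-1); ...; f_1] *)
Definition lastface (s : seq MorS) : seq MorS :=
  match s with
  | [::] => [::]
  | f :: t => match rev t with
              | [::] => [:: f]
              | g :: rt => compS g f :: rev rt
              end
  end.
Definition dgen (n : nat) (s : seq MorS) : fsum (seq MorS) :=
  [seq ((-1) ^+ i, face i s) | i <- iota 0 n] ++
  (if n is 0 then [::] else [:: ((-1) ^+ n, lastface s)]).
Definition dchain (n : nat) (c : fsum (seq MorS)) : fsum (seq MorS) :=
  flatten [seq [seq (p.1 * q.1, q.2) | q <- dgen n p.2] | p <- c].

Definition HH_vanishes (i : nat) : Prop :=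
  forall c, IsChain i c -> cequiv (dchain i c) [::] ->
    exists b, IsChain i.+1 b /\ cequiv (dchain i.+1 b) c.

(** HH_0(C) = C_0 / im d_1 is isomorphic to the free abelian group on Ob C:
    there is a family e of 0-chains such that the induced homomorphism
    Z Ob(C) -> HH_0(C), x |-> [e x], is bijective. *)
Definition extend (e : Ob C -> fsum (seq MorS)) (s : fsum (Ob C)) :=
  flatten [seq [seq (p.1 * q.1, q.2) | q <- e p.2] | p <- s].
Definition HH0_free : Prop :=
  exists e : Ob C -> fsum (seq MorS),
    (forall x, IsChain 0 (e x)) /\
    (forall c, IsChain 0 c -> exists s : fsum (Ob C), exists b,
        IsChain 1 b /\ cequiv c (extend e s ++ dchain 1 b)) /\
    (forall s : fsum (Ob C),
        (exists b, IsChain 1 b /\ cequiv (extend e s) (dchain 1 b)) -> fzero s).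
End HM.

(* A generator f_n ⊗ ... ⊗ f_0 of the Hochschild–Mitchell complex runs around a
   cycle x_0 <= x_1 <= ... <= x_n <= x_0 of objects, so unless some f_i is zero all
   the x_i are one object y.  As C(y,y) = Z id_y, every n-chain is then equivalent
   modulo multilinearity to a combination of the normal forms id_y ⊗ ... ⊗ id_y, on
   which d_n is multiplication by the sum [kappa n] of its signs: 0 for n odd and 1
   for n even.  So the complex is Z Ob(C) in each degree with differentials
   alternately 0 and the identity.  The normal forms are independent: the weight
   f_n ⊗ ... ⊗ f_0 |-> Π phi_y(f_i), with phi_y : C(y,y) ≅ Z extended by zero, is
   multilinear, picks out the coefficient of id_y ⊗ ... ⊗ id_y, and satisfies
   weight ∘ d_n = kappa n · weight on chains. *)

From Pilot Require Import Defs.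
From Stdlib Require Import Eqdep ClassicalEpsilon Classical List.
From mathcomp Require Import all_boot all_order all_algebra.
From mathcomp Require Import ring.
Set Implicit Arguments. Unset Strict Implicit. Unset Printing Implicit Defensive.
Import GRing.Theory.
Local Open Scope ring_scope.

Lemma cdecP (T : Type) (a b : T) : reflect (a = b) (cdec a b).
Proof. by rewrite /cdec; case: excluded_middle_informative => h; constructor. Qed.

Lemma In_cat (T : Type) (e : T) (s t : seq T) : In e (s ++ t) <-> In e s \/ In e t.
Proof. by elim: s => [|a s IH] /=; [tauto | rewrite IH; tauto]. Qed.

Lemma In_split (T : Type) (e : T) (s : seq T) : In e s -> exists l r, s = l ++ e :: r.
Proof.
elim: s => [|a s IH] //= [<-|/IH [l [r ->]]]; first by exists [::], s.
by exists (a :: l), r.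
Qed.

Section FormalSums.
Variable T : Type.
Implicit Types (s t : fsum T) (F : T -> int).

Definition linext F s : int := \sum_(p <- s) p.1 * F p.2.

Definition indicator (g h : T) : int := if cdec h g then 1 else 0.

Lemma coefE s g : coef s g = linext (indicator g) s.
Proof. by apply: eq_bigr => p _; rewrite /indicator; case: cdec; ring. Qed.

Lemma linext_nil F : linext F [::] = 0.
Proof. exact: big_nil. Qed.

Lemma linext_cons F p s : linext F (p :: s) = p.1 * F p.2 + linext F s.
Proof. exact: big_cons. Qed.

Lemma linext_cat F s t : linext F (s ++ t) = linext F s + linext F t.
Proof. exact: big_cat. Qed.

Lemma linext_fneg F s : linext F (fneg s) = - linext F s.
Proof. by rewrite /linext big_map -sumrN; apply: eq_bigr => p _; rewrite mulNr. Qed.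

Lemma linext_scale F a s :
  linext F [seq (a * q.1, q.2) | q <- s] = a * linext F s.
Proof. by rewrite /linext big_map mulr_sumr; apply: eq_bigr => q _; rewrite mulrA. Qed.

Lemma coef_nil g : coef ([::] : fsum T) g = 0.
Proof. exact: big_nil. Qed.

Lemma coef_cons a x s g : coef ((a, x) :: s) g = a * indicator g x + coef s g.
Proof. by rewrite /coef big_cons /indicator /=; case: cdec; rewrite ?mulr1 ?mulr0. Qed.

Lemma coef_cat s t g : coef (s ++ t) g = coef s g + coef t g.
Proof. by rewrite !coefE linext_cat. Qed.

Lemma coef_fneg s g : coef (fneg s) g = - coef s g.
Proof. by rewrite !coefE linext_fneg. Qed.

Definition drop_gen g s := [seq p <- s | ~~ cdec p.2 g].

Lemma linext_drop_gen F g s : linext F s = coef s g * F g + linext F (drop_gen g s).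
Proof.
rewrite /linext /coef big_filter (bigID (fun p => cdec p.2 g)) /=; congr (_ + _).
rewrite big_mkcond [in RHS]big_mkcond mulr_suml; apply: eq_bigr => p _.
by case: cdecP => [->|_]; rewrite ?mul0r.
Qed.

Lemma coef_drop_gen g s h :
  coef (drop_gen g s) h = if cdec h g then 0 else coef s h.
Proof.
rewrite /coef big_filter; case: cdecP => [->|ne].
  by rewrite big1 // => p /negbTE ->.
rewrite [RHS](bigID (fun p => cdec p.2 g)) /= [X in _ = X + _]big1 ?add0r //.
move=> p /cdecP ->.
by case: cdecP => // /esym.
Qed.

Lemma linext_fzero F s : fzero s -> linext F s = 0.
Proof.
elim: {s}(size s).+1 {-2}s (ltnSn (size s)) => // n IH [_ _|[a g] s].
  exact: linext_nil.
rewrite ltnS => hn hs; rewrite (linext_drop_gen F g) hs mul0r add0r; apply: IH.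
  have -> : drop_gen g ((a, g) :: s) = drop_gen g s by rewrite /drop_gen /=; case: cdecP.
  by rewrite size_filter (leq_ltn_trans (count_size _ _)).
by move=> h; rewrite coef_drop_gen hs; case: cdec.
Qed.

Lemma linext_coef_eq F s t : (forall g, coef s g = coef t g) -> linext F s = linext F t.
Proof.
move=> h; apply/eqP; rewrite -subr_eq0 -linext_fneg -linext_cat.
by apply/eqP/linext_fzero => g; rewrite coef_cat coef_fneg h subrr.
Qed.

Lemma coef_map_inj (U : Type) (f : U -> T) (d : fsum U) x :
  injective f -> coef [seq (p.1, f p.2) | p <- d] (f x) = coef d x.
Proof.
move=> inj_f; rewrite /coef big_map; apply: eq_bigr => p _ /=.
case: (cdecP p.2 x) => [->|ne]; first by case: cdecP.
by case: cdecP => // /inj_f.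
Qed.

Lemma coef_map_out (U : Type) (f : U -> T) (d : fsum U) g :
  (forall x, g <> f x) -> coef [seq (p.1, f p.2) | p <- d] g = 0.
Proof.
by move=> hg; rewrite /coef big_map big1 // => p _; case: cdecP => // /esym /hg.
Qed.

End FormalSums.

Ltac coef_simpl := repeat rewrite ?coef_cat ?coef_fneg ?coef_cons ?coef_nil.

Section ChainEquivalence.
Variable C : LinCat.
Notation Gen := (seq (MorS C)).
Implicit Types (s t u : fsum Gen) (l r : Gen).

Definition multilinear (F : Gen -> int) :=
  forall l r (x y : Ob C) (a b : Defs.Hom x y),
  F (l ++ mkMor (a + b) :: r) = F (l ++ mkMor a :: r) + F (l ++ mkMor b :: r).

Lemma linext_expandR F rs : multilinear F -> linext F (expandR rs) = 0.
Proof.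
move=> hF; elim: rs => [|[c r] rs IH]; first exact: linext_nil.
by rewrite /expandR /= !linext_cons -/(expandR rs) IH /= hF; ring.
Qed.

Lemma linext_cequiv F s t : multilinear F -> cequiv s t -> linext F s = linext F t.
Proof.
move=> hF [rs hrs]; apply/eqP; rewrite -subr_eq0 -linext_fneg -linext_cat.
by rewrite (linext_coef_eq F hrs) linext_expandR.
Qed.

Lemma inR_coef s t : (forall g, coef s g = coef t g) -> inR t -> inR s.
Proof. by move=> h [rs hrs]; exists rs => g; rewrite h. Qed.

Lemma inR_cat s t : inR s -> inR t -> inR (s ++ t).
Proof.
move=> [r1 h1] [r2 h2]; exists (r1 ++ r2) => g.
by rewrite /expandR map_cat flatten_cat !coef_cat h1 h2.
Qed.

Lemma inR_fneg s : inR s -> inR (fneg s).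
Proof.
move=> [rs h]; exists [seq (- p.1, p.2) | p <- rs] => g.
rewrite coef_fneg h -coef_fneg; congr coef.
elim: rs {h} => [|[c r] rs IH] //=.
by rewrite /expandR /= -/(expandR rs) -/(expandR [seq (- p.1, p.2) | p <- rs]) -IH.
Qed.

Lemma cequiv_coef s t : (forall g, coef s g = coef t g) -> cequiv s t.
Proof.
move=> h; exists [::] => g.
by rewrite coef_cat coef_fneg h subrr /expandR coef_nil.
Qed.

Lemma cequiv_refl s : cequiv s s.
Proof. exact: cequiv_coef. Qed.

Lemma cequiv_rearrange s t s' t' : cequiv s t ->
  (forall g, coef s' g - coef t' g = coef s g - coef t g) -> cequiv s' t'.
Proof. by move=> h hc; apply: inR_coef h => g; rewrite !coef_cat !coef_fneg. Qed.

Lemma cequiv_sym s t : cequiv s t -> cequiv t s.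
Proof. by move/inR_fneg/inR_coef; apply => g; coef_simpl; ring. Qed.

Lemma cequiv_trans s t u : cequiv s t -> cequiv t u -> cequiv s u.
Proof. by move=> h1 h2; apply: inR_coef (inR_cat h1 h2) => g; coef_simpl; ring. Qed.

Lemma cequiv_cat s s' t t' : cequiv s s' -> cequiv t t' -> cequiv (s ++ t) (s' ++ t').
Proof. by move=> h1 h2; apply: inR_coef (inR_cat h1 h2) => g; coef_simpl; ring. Qed.

Lemma cequiv_entryD c l r (x y : Ob C) (a b : Defs.Hom x y) :
  cequiv [:: (c, l ++ mkMor (a + b) :: r)]
         [:: (c, l ++ mkMor a :: r); (c, l ++ mkMor b :: r)].
Proof.
by exists [:: (c, Build_MLRel l r a b)] => g; rewrite /expandR /=; coef_simpl; ring.
Qed.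

Lemma cequiv_entry0 c l r (x y : Ob C) :
  cequiv [:: (c, l ++ mkMor (0 : Defs.Hom x y) :: r)] [::].
Proof.
have := cequiv_entryD c l r (0 : Defs.Hom x y) 0; rewrite addr0.
by move/cequiv_sym/cequiv_rearrange; apply=> g; coef_simpl; ring.
Qed.

Lemma cequiv_entryN c l r (x y : Ob C) (a : Defs.Hom x y) :
  cequiv [:: (c, l ++ mkMor (- a) :: r)] [:: (- c, l ++ mkMor a :: r)].
Proof.
have := cequiv_entryD c l r a (- a); rewrite subrr => h.
move: (cequiv_trans (cequiv_sym h) (cequiv_entry0 c l r x y)).
by move/cequiv_rearrange; apply=> g; coef_simpl; ring.
Qed.

Lemma cequiv_entryMn c l r (x y : Ob C) (a : Defs.Hom x y) k :
  cequiv [:: (c, l ++ mkMor (a *+ k) :: r)] [:: (c * k%:Z, l ++ mkMor a :: r)].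
Proof.
elim: k => [|k IH].
  rewrite mulr0n; move: (cequiv_entry0 c l r x y).
  by move/cequiv_rearrange; apply=> g; coef_simpl; ring.
have IH' := cequiv_cat (cequiv_refl [:: (c, l ++ mkMor a :: r)]) IH.
have := cequiv_trans (cequiv_entryD c l r a (a *+ k)) IH'.
by rewrite -mulrS; move/cequiv_rearrange; apply=> g; coef_simpl; rewrite -addn1 PoszD; ring.
Qed.

Lemma cequiv_entryMz c l r (x y : Ob C) (a : Defs.Hom x y) (n : int) :
  cequiv [:: (c, l ++ mkMor (a *~ n) :: r)] [:: (c * n, l ++ mkMor a :: r)].
Proof.
case: n => k; first exact: cequiv_entryMn.
have := cequiv_entryMn (- c) l r a k.+1.
move/(cequiv_trans (cequiv_entryN c l r (a *+ k.+1))).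
by move/cequiv_rearrange; apply=> g; coef_simpl; rewrite NegzE; ring.
Qed.

End ChainEquivalence.

(** [kappa n] is the sum of the signs in [dgen n]. *)
Definition kappa (n : nat) : int :=
  \sum_(k <- iota 0 n) (-1) ^+ k + (if n is 0 then 0 else (-1) ^+ n).

Lemma kappaS n : kappa n.+1 = odd n.
Proof.
have alt m : \sum_(k <- iota 0 m) (-1) ^+ k = odd m :> int.
  elim: m => [|m IH]; first by rewrite big_nil.
  rewrite -addn1 iotaD big_cat /= IH big_seq1 add0n -signr_odd addn1 /=.
  by case: (odd m); rewrite ?expr1 ?expr0 /= ?subrr ?add0r.
by rewrite /kappa alt -signr_odd /=; case: (odd n); rewrite ?expr1 ?expr0 /= ?subrr ?addr0.
Qed.

Section Generators.
Variable C : LinCat.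
Notation Gen := (seq (MorS C)).
Notation HomC := (@Defs.Hom C).
Implicit Types (f g : MorS C) (s t : Gen).

Definition idS (x : Ob C) : MorS C := mkMor (idm x).

Definition is_zero_mor (f : MorS C) : Prop :=
  match f with existT _ (existT _ h) => h = 0 end.

Definition has_zero (s : Gen) := exists e, In e s /\ is_zero_mor e.
Definition endos (y : Ob C) (s : Gen) := forall f, In f s -> src f = y /\ tgt f = y.
Definition zero_or_endos (s : Gen) := has_zero s \/ exists y, endos y s.

Lemma comp0m x y z (f : HomC x y) : Defs.comp (0 : HomC y z) f = 0.
Proof. by apply: (addrI (Defs.comp 0 f)); rewrite -compDl !addr0. Qed.

Lemma compm0 x y z (g : HomC y z) : Defs.comp g (0 : HomC x y) = 0.
Proof. by apply: (addrI (Defs.comp g 0)); rewrite -compDr !addr0. Qed.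

Lemma compS_mk x y z (f : HomC y z) (g : HomC x y) :
  compS (mkMor f) (mkMor g) = mkMor (Defs.comp f g).
Proof.
rewrite /compS /mkMor /=; case: excluded_middle_informative => [e|//].
by rewrite (UIP_refl _ _ e).
Qed.

Lemma compS_zero f g : is_zero_mor f \/ is_zero_mor g -> is_zero_mor (compS f g).
Proof.
case: f => y [z f]; case: g => x [y' g] /=.
case: excluded_middle_informative => [e|] //= h; subst y'.
by case: h => -> /=; [exact: comp0m | exact: compm0].
Qed.

Lemma face_has_zero k s : has_zero s -> has_zero (face k s).
Proof.
elim: k s => [|k IH] [|f t] //= [e [he hz]].
- case: t he => [|g t] he; first by exists e.
  case: he => [ef|[eg|et]]; last by exists e; split; [right|].
  + by exists (compS f g); split; [left | apply: compS_zero; left; rewrite ef].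
  + by exists (compS f g); split; [left | apply: compS_zero; right; rewrite eg].
- case: he => [ef|he]; first by exists e; split; [left|].
  have /IH [e' [he' hz']] : has_zero t by exists e.
  by exists e'; split; [right|].
Qed.

Lemma lastface_rcons f t g : lastface (f :: rcons t g) = compS g f :: t.
Proof. by rewrite /= rev_rcons revK. Qed.

Lemma lastface_has_zero s : has_zero s -> has_zero (lastface s).
Proof.
case: s => [|f s] // [e [he hz]]; case: (lastP s) he => [|t g] he; first by exists e.
rewrite lastface_rcons; move: he; rewrite -cats1; case => [ef|/In_cat [et|[eg|//]]].
- by exists (compS g f); split; [left | apply: compS_zero; right; rewrite ef].
- by exists e; split; [right|].
- by exists (compS g f); split; [left | apply: compS_zero; left; rewrite eg].
Qed.

End Generators.

Section Weight.
Variable C : LinCat.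
Notation Gen := (seq (MorS C)).
Notation HomC := (@Defs.Hom C).
Implicit Types (f g : MorS C) (s t : Gen).
Variables (y : Ob C) (phi : HomC y y -> int).
Hypothesis phiD : forall a b, phi (a + b) = phi a + phi b.
Hypothesis phiM : forall a b, phi (Defs.comp a b) = phi a * phi b.
Hypothesis phi1 : phi (idm y) = 1.

(** [phi] extended by zero from endomorphisms of [y] to all morphisms. *)
Definition endo_val (f : MorS C) : int :=
  let: existT a (existT b h) := f in
  match excluded_middle_informative (a = y) with
  | left e1 => match excluded_middle_informative (b = y) with
     | left e2 => phi (eq_rect b (fun w => (HomC y w : Type))
                     (eq_rect a (fun w => (HomC w b : Type)) h y e1) y e2)
     | right _ => 0 end
  | right _ => 0 end.

Lemma endo_val_mk (h : HomC y y) : endo_val (mkMor h) = phi h.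
Proof.
rewrite /endo_val /mkMor; case: (excluded_middle_informative (y = y)) => [e|[]] //.
by rewrite (UIP_refl _ _ e).
Qed.

Lemma endo_val_other x z (h : HomC x z) : ~ (x = y /\ z = y) -> endo_val (mkMor h) = 0.
Proof.
move=> hn; rewrite /endo_val /mkMor.
case: (excluded_middle_informative (x = y)) => [e1|//].
by case: (excluded_middle_informative (z = y)) => [e2|//]; case: hn.
Qed.

Lemma phi0 : phi 0 = 0.
Proof. by apply: (addrI (phi 0)); rewrite -phiD !addr0. Qed.

Lemma endo_valD x z (a b : HomC x z) :
  endo_val (mkMor (a + b)) = endo_val (mkMor a) + endo_val (mkMor b).
Proof.
case: (classic (x = y /\ z = y)) => [[e1 e2]|hn]; last by rewrite !endo_val_other.
by subst; rewrite !endo_val_mk.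
Qed.

Lemma endo_val_zero f : is_zero_mor f -> endo_val f = 0.
Proof.
case: f => x [z h] /= ->; change (endo_val (mkMor (0 : HomC x z)) = 0).
case: (classic (x = y /\ z = y)) => [[e1 e2]|hn]; last exact: endo_val_other.
by subst; rewrite endo_val_mk phi0.
Qed.

Lemma endo_val_compS y' f g : src f = y' /\ tgt f = y' -> src g = y' /\ tgt g = y' ->
  endo_val (compS f g) = endo_val f * endo_val g.
Proof.
case: f => a [b f]; case: g => c [d g] [e1 e2] [e3 e4].
rewrite /src /tgt /= in e1 e2 e3 e4; subst.
have := compS_mk f g; rewrite /mkMor => ->; change (endo_val (mkMor (Defs.comp f g)) =
  endo_val (mkMor f) * endo_val (mkMor g)).
case: (classic (y' = y)) => [e|hn]; first by subst; rewrite !endo_val_mk.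
by rewrite !endo_val_other // => -[].
Qed.

Definition weight (s : Gen) : int := \prod_(f <- s) endo_val f.

Lemma weight_cons f s : weight (f :: s) = endo_val f * weight s.
Proof. exact: big_cons. Qed.

Lemma weight_cat s t : weight (s ++ t) = weight s * weight t.
Proof. exact: big_cat. Qed.

Lemma weight_multilinear : multilinear weight.
Proof. by move=> l r x z a b; rewrite !weight_cat !weight_cons endo_valD; ring. Qed.

Lemma weight_has_zero s : has_zero s -> weight s = 0.
Proof.
move=> [e [he hz]]; have [l [r ->]] := In_split he.
by rewrite weight_cat weight_cons endo_val_zero // mul0r mulr0.
Qed.

Lemma weight_face_endos y' k s : endos y' s -> weight (face k s) = weight s.
Proof.
elim: k s => [|k IH] [|f t] //= hs; last first.
  by rewrite !weight_cons IH // => g hg; apply: hs; right.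
case: t hs => [|g t] //= hs.
by rewrite !weight_cons (@endo_val_compS y') ?mulrA //; apply: hs; [left | right; left].
Qed.

Lemma weight_lastface_endos y' s : endos y' s -> weight (lastface s) = weight s.
Proof.
case: s => [|f t] //; case/lastP: t => [|t g] // hs.
have hf : src f = y' /\ tgt f = y' by apply: hs; left.
have hg : src g = y' /\ tgt g = y'.
  by apply: hs; right; rewrite -cats1; apply/In_cat; right; left.
rewrite lastface_rcons !weight_cons -cats1 weight_cat (endo_val_compS hg hf).
by rewrite /weight big_seq1; ring.
Qed.

Lemma weight_face k s : zero_or_endos s -> weight (face k s) = weight s.
Proof.
case=> [hz|[y' hy]]; last exact: weight_face_endos hy.
by rewrite !weight_has_zero //; exact: face_has_zero.
Qed.

Lemma weight_lastface s : zero_or_endos s -> weight (lastface s) = weight s.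
Proof.
case=> [hz|[y' hy]]; last exact: weight_lastface_endos hy.
by rewrite !weight_has_zero //; exact: lastface_has_zero.
Qed.

Lemma linext_weight_dgen n s : zero_or_endos s ->
  linext weight (dgen n s) = kappa n * weight s.
Proof.
move=> hs; rewrite /dgen linext_cat /linext big_map /kappa mulrDl mulr_suml.
congr (_ + _); first by apply: eq_bigr => k _; rewrite weight_face.
by case: n => [|n]; rewrite ?big_nil ?mul0r // big_seq1 weight_lastface.
Qed.

Lemma weight_nseq_idS x k : weight (nseq k.+1 (idS x)) = indicator y x.
Proof.
rewrite /indicator; case: cdecP => [->|ne].
  by elim: k => [|k IH]; rewrite weight_cons endo_val_mk phi1 ?IH // /weight big_nil.
by rewrite weight_cons endo_val_other ?mul0r // => -[].
Qed.

End Weight.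

Section EndoNormalForm.
Variable C : LinCat.
Notation HomC := (@Defs.Hom C).
Variables (y : Ob C) (phi : HomC y y -> int).
Hypothesis phib : bijective phi.
Hypothesis phiD : forall a b, phi (a + b) = phi a + phi b.
Hypothesis phi1 : phi (idm y) = 1.

Lemma phi_mulz (a : HomC y y) n : phi (a *~ n) = phi a * n.
Proof.
have phiMn k : phi (a *+ k) = phi a * k%:Z.
  elim: k => [|k IH]; first by rewrite mulr0n (phi0 phiD) mulr0.
  by rewrite mulrS phiD IH -addn1 PoszD; ring.
case: n => k; first exact: phiMn.
have phiN b : phi (- b) = - phi b.
  by apply/eqP; rewrite -subr_eq0 opprK -phiD addNr (phi0 phiD).
by rewrite NegzE /= phiN phiMn; ring.
Qed.

Lemma endo_mulz_id (h : HomC y y) : h = idm y *~ phi h.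
Proof. by apply: (bij_inj phib); rewrite phi_mulz phi1 mul1r. Qed.

(** Each endomorphism [h] of [y] is [idm y *~ phi h], so it can be pulled out of the tensor. *)
Lemma cequiv_endos m l r c : endos y m ->
  cequiv [:: (c, l ++ m ++ r)] [:: (c * weight phi m, l ++ nseq (size m) (idS y) ++ r)].
Proof.
elim: m l c => [|f m IH] l c hm.
  by apply: cequiv_coef => g; rewrite /weight big_nil mulr1.
have [e1 e2] := hm f (or_introl erefl).
case: f e1 e2 hm => a [b h] e1 e2 hm; rewrite /src /tgt /= in e1 e2; subst a b.
have hm' : endos y m by move=> f hf; apply: hm; right.
have := cequiv_entryMz c l (m ++ r) (idm y) (phi h); rewrite -endo_mulz_id => st.
have := IH (rcons l (idS y)) (c * phi h) hm'; rewrite !cat_rcons => IH'.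
apply: cequiv_trans st (cequiv_trans IH' (cequiv_coef _)) => g.
change (existT _ y (existT _ y h)) with (mkMor h).
by rewrite weight_cons (endo_val_mk phi) mulrA.
Qed.

End EndoNormalForm.

Section UpperTriangular.
Variable C : LinCat.
Notation Gen := (seq (MorS C)).

Lemma chainable_bounds (le : Ob C -> Ob C -> Prop) :
  (forall x, le x x) -> (forall x y z, le x y -> le y z -> le x z) ->
  forall (h : MorS C) t, chainable (h :: t) ->
  (forall f, In f (h :: t) -> le (src f) (tgt f)) ->
  forall f, In f (h :: t) -> le (src (last h t)) (src f) /\ le (tgt f) (tgt h).
Proof.
move=> le_refl le_trans h t; elim: t h => [|g t IH] h /=.
  by move=> _ _ f [<-|[]]; split; apply: le_refl.
move=> [e hch] hle f hf.
have IHg := IH g hch (fun f hf => hle f (or_intror hf)).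
case: hf => [<-|hf].
  split; last exact: le_refl.
  apply: le_trans (proj1 (IHg g (or_introl erefl))) _.
  by rewrite e; apply: hle; right; left.
have [h1 h2] := IHg f hf; split => //.
by apply: le_trans h2 _; rewrite -e; apply: hle; left.
Qed.

(** A cyclic chain of nonzero morphisms gives [x_0 <= x_1 <= ... <= x_n <= x_0]. *)
Lemma wfgen_zero_or_endos n (s : Gen) : upper_triangular C -> wfgen n s -> zero_or_endos s.
Proof.
move=> [le [le_refl [le_anti [le_trans le_hom]]]] [_ [hch hcyc]].
case: (classic (has_zero s)) => [hz|hnz]; [by left | right].
have hle f : In f s -> le (src f) (tgt f).
  case: f => [a [b h]] hf; apply: le_hom; exists h => h0; apply: hnz.
  by exists (existT _ a (existT _ b h)); split.
case: s hch hcyc hle {hnz} => [//|h t] hch hcyc hle.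
exists (tgt h) => f hf.
have [h1 h2] := chainable_bounds le_refl le_trans hch hle hf.
rewrite /cyclic in hcyc; rewrite -hcyc in h1.
have h3 := hle f hf.
by split; apply: le_anti; [apply: le_trans h3 h2 | | | apply: le_trans h1 h3].
Qed.

Definition idchain n (d : fsum (Ob C)) : fsum Gen :=
  [seq (p.1, nseq n.+1 (idS p.2)) | p <- d].

Lemma cequiv_gen_idchain n c (s : Gen) : strongly_upper_triangular C -> wfgen n s ->
  exists d, cequiv [:: (c, s)] (idchain n d).
Proof.
move=> hC hw; case: (wfgen_zero_or_endos hC.1 hw) => [[e [he hz]]|[y hy]].
  have [l [r ->]] := In_split he.
  by exists [::]; case: e hz {he} => a [b h] /= ->; apply: cequiv_entry0.
have [phi [phib [phiD [_ phi1]]]] := hC.2 y.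
exists [:: (c * weight phi s, y)].
by have := cequiv_endos phib phiD phi1 [::] [::] c hy; rewrite !cats0 /= hw.1.
Qed.

Lemma cequiv_chain_idchain n (c : fsum Gen) : strongly_upper_triangular C -> IsChain n c ->
  exists d, cequiv c (idchain n d).
Proof.
move=> hC; elim: c => [|[a s] c IH] hc; first by exists [::]; apply: cequiv_refl.
inversion hc as [|p q hp hq]; subst.
have [d1 h1] := cequiv_gen_idchain a hC hp.
have [d2 h2] := IH hq.
by exists (d1 ++ d2); rewrite /idchain map_cat; exact: (cequiv_cat h1 h2).
Qed.

End UpperTriangular.

Section Differential.
Variable C : LinCat.
Notation Gen := (seq (MorS C)).
Notation HomC := (@Defs.Hom C).
Implicit Types (x : Ob C) (d : fsum (Ob C)).
Local Arguments compS : simpl never.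

Lemma linext_dchain_cons F n p (c : fsum Gen) :
  linext F (dchain n (p :: c)) = p.1 * linext F (dgen n p.2) + linext F (dchain n c).
Proof. by rewrite /dchain /= linext_cat linext_scale. Qed.

Lemma linext_weight_dchain y (phi : HomC y y -> int) n (c : fsum Gen) :
  upper_triangular C ->
  (forall a b, phi (a + b) = phi a + phi b) ->
  (forall a b, phi (Defs.comp a b) = phi a * phi b) ->
  IsChain n c -> linext (weight phi) (dchain n c) = kappa n * linext (weight phi) c.
Proof.
move=> hC phiD phiM; elim: c => [|p c IH] hc.
  by rewrite /dchain /= !linext_nil mulr0.
inversion hc as [|p' q hp hq]; subst.
rewrite linext_dchain_cons IH // linext_cons.
by rewrite (linext_weight_dgen phiD phiM _ (wfgen_zero_or_endos hC hp)); ring.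
Qed.

Lemma linext_weight_idchain y (phi : HomC y y -> int) n d :
  phi (idm y) = 1 -> linext (weight phi) (idchain n d) = coef d y.
Proof.
move=> phi1; rewrite coefE /linext big_map.
by apply: eq_bigr => p _; rewrite weight_nseq_idS.
Qed.

Lemma compS_idS (x : Ob C) : compS (idS x) (idS x) = idS x.
Proof. by rewrite /idS compS_mk comp1m. Qed.

Lemma face_nseq_idS x k m : (k <= m)%N -> face k (nseq m.+2 (idS x)) = nseq m.+1 (idS x).
Proof. by elim: k m => [|k IH] [|m] //= hk; rewrite ?compS_idS // IH. Qed.

Lemma lastface_nseq_idS x m : lastface (nseq m.+2 (idS x)) = nseq m.+1 (idS x).
Proof.
have -> : nseq m.+2 (idS x) = idS x :: rcons (nseq m (idS x)) (idS x).
  by rewrite -cats1 -[[:: idS x]]/(nseq 1 (idS x)) -nseqD addn1.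
by rewrite lastface_rcons compS_idS.
Qed.

Lemma linext_dgen_idS F x m :
  linext F (dgen m.+1 (nseq m.+2 (idS x))) = kappa m.+1 * F (nseq m.+1 (idS x)).
Proof.
rewrite /dgen linext_cat /linext big_map /kappa mulrDl mulr_suml; congr (_ + _).
  apply: eq_big_seq => k; rewrite mem_iota add0n => /andP [_ hk] /=.
  by rewrite face_nseq_idS.
by rewrite big_seq1 lastface_nseq_idS.
Qed.

Lemma linext_dchain_idchain F m d :
  linext F (dchain m.+1 (idchain m.+1 d)) = kappa m.+1 * linext F (idchain m d).
Proof.
elim: d => [|p d IH]; first by rewrite /dchain /= !linext_nil mulr0.
by rewrite linext_dchain_cons IH /= linext_dgen_idS linext_cons /=; ring.
Qed.

Lemma wfgen_nseq_idS x n : wfgen n (nseq n.+1 (idS x)).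
Proof.
split; first by rewrite size_nseq.
split; last by rewrite /cyclic /=; elim: n.
by elim: n => [|[|n] IH].
Qed.

Lemma IsChain_idchain n d : IsChain n (idchain n d).
Proof. by elim: d => [|p d IH]; constructor => //; apply: wfgen_nseq_idS. Qed.

Lemma cequiv_idchain0 n d : fzero d -> cequiv (idchain n d) [::].
Proof.
move=> hd; apply: cequiv_coef => g; rewrite coef_nil.
pose idgen x := nseq n.+1 (idS x).
case: (classic (exists x, g = idgen x)) => [[x ->]|hg].
  by rewrite (coef_map_inj (f := idgen)) ?hd // => a b [].
by rewrite (coef_map_out (f := idgen)) // => x hx; apply: hg; exists x.
Qed.

End Differential.

Section Homology.
Variable C : LinCat.
Hypothesis hC : strongly_upper_triangular C.

Lemma extend_idS (s : fsum (Ob C)) :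
  extend (fun x => [:: (1, [:: idS x])]) s = idchain 0 s.
Proof. by rewrite /extend /idchain; elim: s => [|p s IH] //=; rewrite mulr1 IH. Qed.

Lemma HH0_free_sut : HH0_free C.
Proof.
exists (fun x => [:: (1, [:: idS x])]); split; [|split].
- by move=> x; constructor; [exact: (wfgen_nseq_idS x 0) | constructor].
- move=> c hc; have [d hd] := cequiv_chain_idchain hC hc.
  exists d, [::]; split; first by constructor.
  by rewrite extend_idS /dchain /= cats0.
- move=> s [b [hb]]; rewrite extend_idS => heq t.
  have [phi [_ [phiD [phiM phi1]]]] := hC.2 t.
  rewrite -(linext_weight_idchain 0 s phi1) (linext_cequiv (weight_multilinear phiD) heq).
  by rewrite (linext_weight_dchain hC.1 phiD phiM hb) kappaS mul0r.
Qed.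

(** On normal forms [d_(m+2)] is the identity if [m] is even; if [m] is odd then
    [d_(m+1)] is the identity, so the cycle [c] is already zero. *)
Lemma HH_vanishes_sut i : (0 < i)%N -> HH_vanishes C i.
Proof.
case: i => [//|m] _ c hc hcyc; have [d hd] := cequiv_chain_idchain hC hc.
exists (idchain m.+2 d); split; first exact: IsChain_idchain.
apply: cequiv_trans _ (cequiv_sym hd).
have d_idchain g :
    coef (dchain m.+2 (idchain m.+2 d)) g = kappa m.+2 * coef (idchain m.+1 d) g.
  by rewrite !coefE linext_dchain_idchain.
case ho: (odd m); last by apply: cequiv_coef => g; rewrite d_idchain kappaS /= ho mul1r.
have hd0 : fzero d.
  move=> x; have [phi [_ [phiD [phiM phi1]]]] := hC.2 x.
  have := linext_cequiv (weight_multilinear phiD) hcyc.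
  rewrite (linext_weight_dchain hC.1 phiD phiM hc) kappaS ho mul1r linext_nil.
  by rewrite (linext_cequiv (weight_multilinear phiD) hd) linext_weight_idchain.
apply: (cequiv_trans (t := [::])); last exact/cequiv_sym/cequiv_idchain0.
by apply: cequiv_coef => g; rewrite d_idchain kappaS /= ho mul0r coef_nil.
Qed.

End Homology.

Theorem proposition4p2 (C : LinCat) (hC : strongly_upper_triangular C) :
  HH0_free C /\ (forall i : nat, (0 < i)%N -> HH_vanishes C i).
Proof. by split; [exact: HH0_free_sut | exact: HH_vanishes_sut]. Qed.
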